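(* Let $\mathcal S\subseteq\mathsf P^n$ be the stabilizer group of a stabilizer code, let $g_1,\dots,g_m\in\mathcal S$, and in $\mathsf P_{DS}=\mathsf P^n\times\mathbb F_2^m$ let $f_i=(g_i,\hat i)$ ($\hat i$ the $i$-th standard basis vector), $\mathcal M=\langle f_1,\dots,f_m\rangle$, $\mathcal U=\mathcal M^\perp$. View $\mathcal S$ as $\{(s,0):s\in\mathcal S\}\subseteq\mathsf P_{DS}$, let $\mathcal L=\mathcal S^\perp$ (in $\mathsf P_{DS}$), and let the distance $d$ be the minimal weight (number of nonidentity coordinates among the $n+m$) of an element of $\mathcal U\setminus\mathcal S$. Let $\Gamma\subseteq 2^{[n+m]}$ with $|\gamma|\le\lfloor\frac{d-1}2\rfloor$ for all $\gamma$, and $P=\mathop{\ast}_{\gamma\in\Gamma}P_\gamma$ a distribution of errors $(e_d,e_m)\in\mathsf P_{DS}$ with each $P_\gamma$ supported on elements with support in $\gamma$ and $P_\gamma(I)>\frac12$. Let $P_m$ be the distribution on $\mathsf P_{DS}$ of $(I,e_m)$ where $(e_d,e_m)\sim P$, and $\tilde P=P\ast P_m$ (the distribution effectively observed when comparing syndromes of consecutive rounds). Then the logical channel $P_L(e)=\frac1{|\mathcal S|}\sum_{s\in\mathcal S}P(e\,(s,0))$ is uniquely determined by the syndrome statistics $\tilde E(s)=\sum_{e\in\mathsf P_{DS}}\langle s,e\rangle\tilde P(e)$, $s\in\mathcal M$ (among all such channels with the same $\Gamma$).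
   Context: $\mathsf P^n$ is the $n$-qubit Pauli group modulo phases. Bicharacter on $\mathsf P_{DS}$: $\langle(a,x),(b,y)\rangle=\langle a,b\rangle(-1)^{\sum_i x_iy_i}$, where $\langle a,b\rangle=+1$ if the Paulis $a,b$ commute and $-1$ otherwise; $B^\perp=\{c:\langle c,b\rangle=1\ \forall b\in B\}$. The support of $(e_d,e_m)$ is the set of qubit positions where $e_d$ is nonidentity together with positions $n+i$ where $e_m[i]=1$. Convolution: $(f\ast g)(a)=\sum_b f(b)g(ab)$. Phenomenological model: in each round a new error $(e_d,e_m)\sim P$ occurs, $e_d$ a data error and $e_m$ flips of the outcomes of the measurements of $g_1,\dots,g_m$. *)

From HB Require Import structures.
From mathcomp Require Import all_boot all_order all_algebra.
From mathcomp Require Import reals.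
Set Implicit Arguments. Unset Strict Implicit. Unset Printing Implicit Defensive.
Import Order.TTheory GRing.Theory Num.Theory.
Local Open Scope ring_scope.

(* Single-qubit Pauli modulo phases, encoded as (x,z) bits:
   I = (0,0), X = (1,0), Y = (1,1), Z = (0,1). *)
Definition Pn (n : nat) := {ffun 'I_n -> bool * bool}.
Definition PDS (n m : nat) := (Pn n * {ffun 'I_m -> bool})%type.

Definition pauli_id (n : nat) : Pn n := [ffun => (false, false)].
Definition pmul (n : nat) (a b : Pn n) : Pn n :=
  [ffun i => (xorb (a i).1 (b i).1, xorb (a i).2 (b i).2)].

Definition ds_id (n m : nat) : PDS n m := (pauli_id n, [ffun => false]).
Definition ds_mul (n m : nat) (u v : PDS n m) : PDS n m :=
  (pmul u.1 v.1, [ffun j => xorb (u.2 j) (v.2 j)]).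

Definition anticomm (n : nat) (a b : Pn n) : bool :=
  odd (\sum_(i < n) (((a i).1 && (b i).2) (+) ((a i).2 && (b i).1)) : nat).
Definition comm_sign (R : realType) (n : nat) (a b : Pn n) : R :=
  (-1) ^+ anticomm a b.

Definition bicharb (n m : nat) (u v : PDS n m) : bool :=
  xorb (anticomm u.1 v.1) (odd (\sum_(j < m) (u.2 j && v.2 j) : nat)).
Definition bichar (R : realType) (n m : nat) (u v : PDS n m) : R :=
  (-1) ^+ bicharb u v.

Definition perp (n m : nat) (B : {set PDS n m}) : {set PDS n m} :=
  [set c | [forall b in B, ~~ bicharb c b]].

Definition is_subgroup_ds (n m : nat) (H : {set PDS n m}) : bool :=
  (ds_id n m \in H) && [forall a in H, forall b in H, ds_mul a b \in H].
Definition gen_ds (n m : nat) (A : {set PDS n m}) : {set PDS n m} :=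
  [set x | [forall H : {set PDS n m},
              (is_subgroup_ds H && (A \subset H)) ==> (x \in H)]].

Definition stabilizer_group (n : nat) (S : {set Pn n}) : Prop :=
  [/\ pauli_id n \in S,
      (forall a b, a \in S -> b \in S -> pmul a b \in S) &
      (forall a b, a \in S -> b \in S -> anticomm a b = false)].

Definition fgen (n m : nat) (g : 'I_m -> Pn n) (i : 'I_m) : PDS n m :=
  (g i, [ffun j => j == i]).
Definition Mgrp (n m : nat) (g : 'I_m -> Pn n) : {set PDS n m} :=
  gen_ds [set fgen g i | i : 'I_m].
Definition Ugrp (n m : nat) (g : 'I_m -> Pn n) : {set PDS n m} :=
  perp (Mgrp g).

Definition emb (n m : nat) (s : Pn n) : PDS n m := (s, [ffun => false]).
Definition Sds (n m : nat) (S : {set Pn n}) : {set PDS n m} := [set emb m s | s in S].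

(* support in [n+m]: positions i < n where e_d is non-identity, and n+j where e_m[j]=1 *)
Definition supp (n m : nat) (e : PDS n m) : {set 'I_(n + m)} :=
  [set k | match split k with
           | inl i => e.1 i != (false, false)
           | inr j => e.2 j
           end].
Definition weight (n m : nat) (e : PDS n m) : nat := #|supp e|.

Definition is_distance (n m : nat) (S : {set Pn n}) (g : 'I_m -> Pn n) (d : nat) : Prop :=
  (exists2 e, e \in Ugrp g :\: Sds m S & weight e = d) /\
  (forall e, e \in Ugrp g :\: Sds m S -> (d <= weight e)%N).

Definition is_distr (R : realType) (n m : nat) (P : PDS n m -> R) : Prop :=
  (forall e, 0 <= P e) /\ \sum_e P e = 1.

Definition conv (R : realType) (n m : nat) (f g : PDS n m -> R) : PDS n m -> R :=
  fun a => \sum_b f b * g (ds_mul a b).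
Definition delta_id (R : realType) (n m : nat) : PDS n m -> R :=
  fun e => if e == ds_id n m then 1 else 0.
Definition conv_fam (R : realType) (n m : nat) (Gamma : {set {set 'I_(n + m)}})
  (Pg : {set 'I_(n + m)} -> PDS n m -> R) : PDS n m -> R :=
  \big[(fun f h => @conv R n m f h) / @delta_id R n m]_(gm in Gamma) Pg gm.

Definition good_factor (R : realType) (n m : nat) (gm : {set 'I_(n + m)})
  (Q : PDS n m -> R) : Prop :=
  [/\ is_distr Q, (forall e, Q e != 0 -> supp e \subset gm) & Q (ds_id n m) > 1 / 2].

Definition meas_part (n m : nat) (e : PDS n m) : PDS n m := (pauli_id n, e.2).
Definition Pmeas (R : realType) (n m : nat) (P : PDS n m -> R) : PDS n m -> R :=
  fun a => \sum_(e | meas_part e == a) P e.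
Definition Ptilde (R : realType) (n m : nat) (P : PDS n m -> R) : PDS n m -> R :=
  conv P (Pmeas P).

Definition Etilde (R : realType) (n m : nat) (P : PDS n m -> R) (s : PDS n m) : R :=
  \sum_e bichar R s e * Ptilde P e.

Definition logical_channel (R : realType) (n m : nat) (S : {set Pn n})
  (P : PDS n m -> R) (e : PDS n m) : R :=
  (#|S|%:R)^-1 * \sum_(s in S) P (ds_mul e (emb m s)).

(* Everything is read off the characters c |-> <c, e> of the elementary abelian 2-group P_DS,
   written additively below.  The Fourier transform  ^f(c) = sum_e <c, e> f(e)  turns the
   convolution P = *_gamma P_gamma into a product of factors ^P_gamma, each positive because
   P_gamma(I) > 1/2, and  E~(s) = ^P(s) ^P(s_m)  with s_m the measurement part of s.  Taking
   logarithms, D = ln E~_P - ln E~_Q is a sum of functions each invariant under translations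
   supported off one gamma, so ^D is supported on errors that are local to some gamma.  If D
   vanishes on M, Poisson summation makes ^D sum to zero over every coset of U = M^perp; two
   local errors in one coset differ by an element of U of weight < d, i.e. by a stabilizer, so
   every c in L = S^perp pairs in the same way with all of them, and D(c) = 0.  Using this at c
   and at c_m gives ^P = ^Q on L, and the logical channel only depends on ^P restricted to L. *)

From HB Require Import structures.
From mathcomp Require Import all_boot all_order all_algebra.
From mathcomp Require Import reals exp ring lra zify.
Set Implicit Arguments. Unset Strict Implicit. Unset Printing Implicit Defensive.
Import Order.TTheory GRing.Theory Num.Theory.
Local Open Scope ring_scope.

Lemma xorb_addb (a b : bool) : xorb a b = a + b.
Proof. by case: a; case: b. Qed.

Lemma odd_sum_bool (I : finType) (F : I -> bool) : odd (\sum_i (F i : nat)) = \sum_i F i.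
Proof. by rewrite (big_morph odd oddD (erefl (odd 0))); apply: eq_bigr => i _; rewrite oddb. Qed.

Section PauliGroup.
Variables n m : nat.
Local Notation G := (PDS n m).

Lemma pmulE (a b : Pn n) : pmul a b = a + b.
Proof. by apply/ffunP => i; rewrite !ffunE; case: (a i) (b i) => [[] []] [[] []]. Qed.

Lemma ds_mulE (u v : G) : ds_mul u v = u + v.
Proof.
case: u v => [u1 u2] [v1 v2]; rewrite /ds_mul pmulE; congr pair.
by apply/ffunP => j; rewrite !ffunE; case: (u2 j) (v2 j).
Qed.

Lemma ds_idE : ds_id n m = 0.
Proof. by congr pair; apply/ffunP => i; rewrite !ffunE. Qed.

Lemma ds_oppE (u : G) : - u = u.
Proof. by case: u => [u1 u2]; congr pair; apply/ffunP => i; rewrite !ffunE //; case: (u1 i). Qed.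

Lemma ds_addrr (u : G) : u + u = 0.
Proof. by rewrite -{2}[u]ds_oppE subrr. Qed.

Lemma ds_addKr (u : G) : involutive (+%R u).
Proof. by move=> v; rewrite addrA ds_addrr add0r. Qed.

Definition sympl (x y : bool * bool) : bool := x.1 * y.2 + x.2 * y.1.

Lemma bicharbE (u v : G) :
  bicharb u v = \sum_i sympl (u.1 i) (v.1 i) + \sum_j u.2 j * v.2 j.
Proof. by rewrite /bicharb /anticomm xorb_addb !odd_sum_bool. Qed.

Lemma bicharbC (u v : G) : bicharb u v = bicharb v u.
Proof.
rewrite !bicharbE; congr (_ + _); apply: eq_bigr => i _; rewrite /sympl; ring.
Qed.

Lemma bicharbDl (u v w : G) : bicharb (u + v) w = bicharb u w + bicharb v w.
Proof.
rewrite !bicharbE addrACA -!big_split /=.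
by congr (_ + _); apply: eq_bigr => i _; rewrite !ffunE /sympl /=; ring.
Qed.

Lemma bicharbDr (u v w : G) : bicharb w (u + v) = bicharb w u + bicharb w v.
Proof. by rewrite !(bicharbC w) bicharbDl. Qed.

Lemma bicharb0r (u : G) : bicharb u 0 = false.
Proof. by have := bicharbDr 0 0 u; rewrite addr0; case: (bicharb u 0). Qed.

Lemma supp_lshift (e : G) i : (lshift m i \in supp e) = (e.1 i != 0).
Proof. by rewrite inE (unsplitK (inl i : 'I_n + 'I_m)). Qed.

Lemma supp_rshift (e : G) j : (rshift n j \in supp e) = e.2 j.
Proof. by rewrite inE (unsplitK (inr j : 'I_n + 'I_m)). Qed.

Lemma ordP (k : 'I_(n + m)) : (exists i, k = lshift m i) \/ (exists j, k = rshift n j).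
Proof. by rewrite -[k]splitK; case: (split k) => [i|j]; [left; exists i | right; exists j]. Qed.

Lemma supp_eq0 (e : G) : (supp e == set0) = (e == 0).
Proof.
apply/eqP/eqP => [e0|->]; last first.
  apply/setP => k; case: (ordP k) => [[i ->]|[j ->]];
    by rewrite ?supp_lshift ?supp_rshift !ffunE ?eqxx inE.
case: e e0 => [e1 e2] e0; congr pair; apply/ffunP => i; rewrite ffunE.
  by apply/eqP; move: (in_set0 (lshift m i)); rewrite -e0 supp_lshift => /negbFE.
by move: (in_set0 (rshift n i)); rewrite -e0 supp_rshift.
Qed.

Lemma supp_add (u v : G) : supp (u + v) \subset supp u :|: supp v.
Proof.
apply/subsetP => k; case: (ordP k) => [[i ->]|[j ->]];
  rewrite in_setU ?supp_lshift ?supp_rshift !ffunE.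
  by case: (u.1 i) (v.1 i) => [[] []] [[] []].
by case: (u.2 j) (v.2 j).
Qed.

Lemma bicharb_disjoint (u v : G) : [disjoint supp u & supp v] -> bicharb u v = false.
Proof.
move=> uv; have uv' k : k \in supp u -> k \in supp v -> False.
  by move=> ku kv; move: (disjointFr uv ku); rewrite kv.
rewrite bicharbE !big1 // => [j _|i _].
  by move: (uv' (rshift n j)); rewrite !supp_rshift; case: (u.2 j) (v.2 j) => [] [] // /(_ isT isT).
case: (eqVneq (u.1 i) 0) => [-> //|ui]; case: (eqVneq (v.1 i) 0) => [-> | vi].
  by rewrite /sympl /= !mulr0.
by case: (uv' (lshift m i)); rewrite ?supp_lshift.
Qed.

Lemma anticommuting_witness (z : G) k : k \in supp z ->
  exists2 w : G, supp w \subset [set k] & bicharb w z.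
Proof.
have supp_sub1 k0 (w : G) : (forall k', k' != k0 -> k' \notin supp w) -> supp w \subset [set k0].
  move=> wk; apply/subsetP => k' kw; rewrite inE; apply: contraLR kw; apply: wk.
case: (ordP k) => [[i ->]|[j ->]].
- rewrite supp_lshift => zi.
  exists ([ffun i' => if i' == i then (~~ (z.1 i).1, (z.1 i).1) else 0], 0).
    apply: supp_sub1 => k'; case: (ordP k') => [[i' ->]|[j' ->]];
      rewrite ?supp_lshift ?supp_rshift !ffunE //.
    by case: (i' =P i) => [->|//]; rewrite eqxx.
  rewrite bicharbE [X in _ + X]big1 ?addr0 => [|j _]; last by rewrite ffunE mul0r.
  rewrite (bigD1 i) //= big1 ?addr0 => [|i' /negbTE ne]; last by rewrite ffunE ne.
  by rewrite ffunE eqxx /sympl; move: zi; case: (z.1 i) => [[] []].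
- rewrite supp_rshift => zj.
  exists (0, [ffun j' => j' == j]).
    apply: supp_sub1 => k'; case: (ordP k') => [[i' ->]|[j' ->]];
      rewrite ?supp_lshift ?supp_rshift !ffunE ?eqxx //.
    by move=> ne; apply: contraNN ne => /eqP ->.
  rewrite bicharbE big1 ?add0r => [|i _]; last by rewrite ffunE /sympl /= !mul0r.
  rewrite (bigD1 j) //= big1 ?addr0 => [|j' /negbTE ne]; last by rewrite ffunE ne.
  by rewrite ffunE eqxx zj.
Qed.

Lemma meas_partD (u v : G) : meas_part (u + v) = meas_part u + meas_part v.
Proof. by congr pair; apply/ffunP => i; rewrite !ffunE. Qed.

Lemma supp_meas_part (u : G) : supp (meas_part u) \subset supp u.
Proof.
apply/subsetP => k; case: (ordP k) => [[i ->]|[j ->]];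
  by rewrite ?supp_lshift ?supp_rshift ?ffunE ?eqxx.
Qed.

Lemma bicharb_meas_part (u v : G) : bicharb u (meas_part v) = bicharb (meas_part u) v.
Proof.
rewrite !bicharbE; congr (_ + _).
by rewrite !big1 // => i _; rewrite ffunE /sympl /= ?mulr0 ?mul0r ?addr0.
Qed.

Lemma subgroup_dsP (H : {set G}) :
  reflect (0 \in H /\ forall u v, u \in H -> v \in H -> u + v \in H) (is_subgroup_ds H).
Proof.
rewrite /is_subgroup_ds ds_idE; apply: (iffP andP) => -[H0 HD]; split=> //.
  by move=> u v uH vH; rewrite -ds_mulE; apply: (forall_inP (forall_inP HD u uH)).
by apply/forall_inP => u uH; apply/forall_inP => v vH; rewrite ds_mulE HD.
Qed.

Section Subgroup.
Variable H : {set G}.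
Hypothesis subH : is_subgroup_ds H.

Lemma subgroup_ds0 : 0 \in H.
Proof. by case/subgroup_dsP: subH. Qed.

Lemma subgroup_dsD u v : u \in H -> v \in H -> u + v \in H.
Proof. by case/subgroup_dsP: subH => _; apply. Qed.

Lemma subgroup_dsDr u v : v \in H -> (u + v \in H) = (u \in H).
Proof.
move=> vH; apply/idP/idP => [|uH]; last exact: subgroup_dsD.
by move/subgroup_dsD/(_ vH); rewrite -addrA ds_addrr addr0.
Qed.

End Subgroup.

Lemma gen_ds_subgroup (A : {set G}) : is_subgroup_ds (gen_ds A).
Proof.
apply/subgroup_dsP; split.
  by rewrite inE; apply/forallP => H; apply/implyP => /andP[/subgroup_ds0].
move=> u v; rewrite !inE => /forallP uH /forallP vH; apply/forallP => H.
by apply/implyP => HA; apply: subgroup_dsD (implyP (uH H) HA) (implyP (vH H) HA); case/andP: HA.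
Qed.

Lemma perp_subgroup (B : {set G}) : is_subgroup_ds (perp B).
Proof.
apply/subgroup_dsP; split.
  by rewrite inE; apply/forall_inP => b _; rewrite bicharbC bicharb0r.
move=> u v; rewrite !inE => /forall_inP uB /forall_inP vB; apply/forall_inP => b bB.
by rewrite bicharbDl (negbTE (uB b bB)) (negbTE (vB b bB)).
Qed.

Lemma perpT : perp [set: G] = [set 0 : G].
Proof.
apply/setP => z; rewrite !inE; apply/forall_inP/eqP => [zT|->]; last first.
  by move=> b _; rewrite bicharbC bicharb0r.
apply/eqP; rewrite -supp_eq0; apply/negPn/set0Pn => -[k kz].
have [w _ wz] := anticommuting_witness kz.
by move: (zT w (in_setT w)); rewrite bicharbC wz.
Qed.

Lemma Sds_subgroup (S : {set Pn n}) : stabilizer_group S -> is_subgroup_ds (Sds m S).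
Proof.
case=> S1 SM _; apply/subgroup_dsP; split.
  by apply/imsetP; exists (pauli_id n); rewrite // ds_idE.
move=> _ _ /imsetP[a aS ->] /imsetP[b bS ->]; apply/imsetP; exists (pmul a b); first exact: SM.
by rewrite -ds_mulE /ds_mul; congr pair; apply/ffunP => j; rewrite !ffunE.
Qed.

End PauliGroup.

Section Fourier.
Variables (R : realType) (n m : nat).
Local Notation G := (PDS n m).
Local Notation chi := (bichar R).

Lemma bicharC (u v : G) : chi u v = chi v u.
Proof. by rewrite /bichar bicharbC. Qed.

Lemma bicharDl (u v w : G) : chi (u + v) w = chi u w * chi v w.
Proof. by rewrite /bichar bicharbDl signr_addb. Qed.

Lemma bicharDr (u v w : G) : chi w (u + v) = chi w u * chi w v.
Proof. by rewrite /bichar bicharbDr signr_addb. Qed.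

Lemma bichar0r (u : G) : chi u 0 = 1.
Proof. by rewrite /bichar bicharb0r. Qed.

Lemma sum_bichar_subgroup (H : {set G}) z : is_subgroup_ds H ->
  \sum_(y in H) chi y z = if z \in perp H then #|H|%:R else 0.
Proof.
move=> subH; rewrite inE; case: ifPn => [/forall_inP zH | /forall_inPn[b bH /negbNE bz]].
  rewrite -sumr_const; apply: eq_bigr => y yH.
  by rewrite /bichar bicharbC (negbTE (zH y yH)).
apply/eqP; rewrite -[_ == 0](@mulrn_eq0 _ _ 2) mulr2n; apply/eqP.
rewrite {2}(reindex_inj (addrI b)) /=.
rewrite [X in _ + X](eq_bigl (fun y => y \in H)) => [|y]; last by rewrite addrC subgroup_dsDr.
rewrite -big_split big1 //= => y _.
by rewrite bicharDl [chi b z]bicharC /bichar bicharbC bz mulN1r addrN.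
Qed.

Lemma sum_bichar (z : G) : \sum_y chi y z = if z == 0 then #|{: G}|%:R else 0.
Proof.
rewrite (eq_bigl (fun y => y \in [set: G])) => [|y]; last by rewrite inE.
rewrite sum_bichar_subgroup; last by apply/subgroup_dsP; split=> [|*]; rewrite inE.
by rewrite perpT inE cardsT.
Qed.

Lemma natr_card_subgroup_neq0 (H : {set G}) : is_subgroup_ds H -> #|H|%:R != 0 :> R.
Proof.
by move=> subH; rewrite pnatr_eq0 cards_eq0; apply/set0Pn; exists 0; apply: subgroup_ds0.
Qed.

Lemma natr_card_neq0 : #|{: G}|%:R != 0 :> R.
Proof. by rewrite pnatr_eq0 -lt0n; apply/card_gt0P; exists 0. Qed.

Definition fourier (f : G -> R) (c : G) : R := \sum_e chi c e * f e.

Lemma fourier_inversion (f : G -> R) x :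
  \sum_c chi c x * fourier f c = #|{: G}|%:R * f x.
Proof.
transitivity (\sum_e f e * \sum_c chi c (x + e)).
  rewrite /fourier; under eq_bigr => c _ do rewrite big_distrr /=.
  rewrite exchange_big /=; apply: eq_bigr => e _; rewrite big_distrr /=.
  by apply: eq_bigr => c _; rewrite bicharDr; ring.
rewrite (bigD1 x) //= sum_bichar ds_addrr eqxx big1 ?addr0 1?mulrC // => e ne.
by rewrite sum_bichar addr_eq0 ds_oppE eq_sym (negbTE ne) mulr0.
Qed.

Lemma fourier_conv (f g : G -> R) c : fourier (conv f g) c = fourier f c * fourier g c.
Proof.
rewrite /fourier /conv mulr_suml.
under eq_bigr => a _ do rewrite big_distrr /=.
rewrite exchange_big /=; apply: eq_bigr => b _.
rewrite mulr_sumr (reindex_inj (addrI b)) /=; apply: eq_bigr => a _.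
by rewrite ds_mulE addrAC ds_addrr add0r bicharDr; ring.
Qed.

Lemma fourier_delta_id c : fourier (@delta_id R n m) c = 1.
Proof.
rewrite /fourier (bigD1 (0 : G)) //= big1 ?addr0 /delta_id ds_idE ?eqxx ?bichar0r ?mulr1 //.
by move=> e /negbTE ->; rewrite mulr0.
Qed.

Lemma fourier_conv_fam (Gamma : {set {set 'I_(n + m)}}) (Pg : {set 'I_(n + m)} -> G -> R) c :
  fourier (conv_fam Gamma Pg) c = \prod_(gm in Gamma) fourier (Pg gm) c.
Proof.
exact: (big_morph (fourier^~ c) (fun f g => fourier_conv f g c) (fourier_delta_id c)).
Qed.

Lemma fourier_Pmeas (P : G -> R) c : fourier (Pmeas P) c = fourier P (meas_part c).
Proof.
rewrite /fourier /Pmeas.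
under eq_bigr => a _ do rewrite big_mkcond big_distrr /=.
rewrite exchange_big /=; apply: eq_bigr => e _.
rewrite (bigD1 (meas_part e)) //= eqxx big1 ?addr0; first by rewrite /bichar bicharb_meas_part.
by move=> a /negbTE; rewrite eq_sym => ->; rewrite mulr0.
Qed.

Lemma Etilde_fourier (P : G -> R) s : Etilde P s = fourier P s * fourier P (meas_part s).
Proof. by rewrite /Etilde /Ptilde -/(fourier _ _) fourier_conv fourier_Pmeas. Qed.

Lemma fourier_gt0 (Q : G -> R) c : is_distr Q -> 1 / 2 < Q 0 -> 0 < fourier Q c.
Proof.
case=> Q_ge0 Q_sum1 Q0; rewrite /fourier (bigD1 (0 : G)) //= bichar0r mul1r.
move: Q_sum1; rewrite (bigD1 (0 : G)) //= => Q_sum1.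
have : - \sum_(e | e != 0 :> G) Q e <= \sum_(e | e != 0 :> G) chi c e * Q e.
  rewrite -sumrN; apply: ler_sum => e _; have := Q_ge0 e.
  by rewrite /bichar; case: (bicharb c e); rewrite ?expr1 ?expr0 ?mulN1r ?mul1r => ?; lra.
by move: Q0; rewrite ltr_pdivrMr //; lra.
Qed.

Lemma fourier_addr_disjoint (Q : G -> R) (gm : {set 'I_(n + m)}) (c w : G) :
  (forall e, Q e != 0 -> supp e \subset gm) -> [disjoint supp w & gm] ->
  fourier Q (c + w) = fourier Q c.
Proof.
move=> Q_gm wgm; apply: eq_bigr => e _.
case: (eqVneq (Q e) 0) => [-> | /Q_gm egm]; first by rewrite !mulr0.
by rewrite bicharDl {2}/bichar bicharb_disjoint ?mulr1 // (disjointWr egm wgm).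
Qed.

Lemma fourier_eq0_periodic (f : G -> R) (w y : G) :
  (forall c, f (c + w) = f c) -> bicharb y w -> fourier f y = 0.
Proof.
move=> fw yw; apply/eqP; rewrite -[_ == 0](@mulrn_eq0 _ _ 2) mulr2n; apply/eqP.
rewrite {2}/fourier (reindex_inj (addIr w)) -big_split big1 //= => e _.
by rewrite fw bicharDr [chi y w]/bichar yw expr1; ring.
Qed.

Lemma fourier_local_support (f : G -> R) (gm : {set 'I_(n + m)}) y :
  (forall c w : G, [disjoint supp w & gm] -> f (c + w) = f c) ->
  fourier f y != 0 -> supp y \subset gm.
Proof.
move=> f_loc; apply: contraR => /subsetPn[k ky kgm].
have [w wk wy] := anticommuting_witness ky.
apply/eqP/(fourier_eq0_periodic (w := w)); last by rewrite bicharbC.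
by move=> c; apply/f_loc/(disjointWl wk); rewrite disjoints1.
Qed.

Lemma poisson_summation (H : {set G}) (f : G -> R) (y0 : G) : is_subgroup_ds H ->
  #|H|%:R * \sum_(y : G | y + y0 \in perp H) fourier f y
  = #|{: G}|%:R * \sum_(s in H) chi s y0 * f s.
Proof.
move=> subH; rewrite big_mkcond [LHS]mulr_sumr /=.
transitivity (\sum_(y : G) (\sum_(s in H) chi s (y + y0)) * fourier f y).
  by apply: eq_bigr => y _; rewrite sum_bichar_subgroup //; case: ifP; rewrite ?mulr0 ?mul0r.
under [LHS]eq_bigr => y _ do rewrite mulr_suml.
rewrite exchange_big mulr_sumr; apply: eq_bigr => s _.
rewrite mulrCA -fourier_inversion mulr_sumr; apply: eq_bigr => y _.
by rewrite bicharDr (bicharC s y); ring.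
Qed.

Lemma sum_cosets (H : {set G}) (F : G -> R) :
  \sum_(y0 : G) \sum_(y : G | y + y0 \in H) F y = #|H|%:R * \sum_y F y.
Proof.
under eq_bigr => y0 _ do rewrite big_mkcond /=.
rewrite exchange_big mulr_sumr; apply: eq_bigr => y _.
rewrite -big_mkcond /= sumr_const mulr_natl.
have addI := can_inj (ds_addKr y).
congr (_ *+ _); rewrite -(card_imset H addI); apply: eq_card => y0.
apply/idP/imsetP => [yH | [x xH ->]]; last by rewrite unfold_in /= ds_addKr.
by exists (y + y0); rewrite ?ds_addKr.
Qed.

End Fourier.

Section LocalDecoding.
Variables (R : realType) (n m : nat) (S : {set Pn n}) (g : 'I_m -> Pn n) (d : nat).
Variable Gamma : {set {set 'I_(n + m)}}.
Hypotheses (stabS : stabilizer_group S) (dist : is_distance S g d).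
Hypothesis Gamma_small : forall gm, gm \in Gamma -> (#|gm| <= (d.-1)./2)%N.
Local Notation G := (PDS n m).
Local Notation chi := (bichar R).

Lemma Ugrp_low_weight (u : G) : u \in Ugrp g -> (weight u <= d.-1)%N -> u \in Sds m S.
Proof.
move=> uU wu; apply: contraT => uS.
have := dist.2 u; rewrite in_setD uS uU => /(_ isT) du.
have : weight u == 0%N by lia.
rewrite /weight cards_eq0 supp_eq0 => /eqP u0.
by move: uS; rewrite u0 subgroup_ds0 // Sds_subgroup.
Qed.

Definition local (y : G) : bool := [exists gm in Gamma, supp y \subset gm].

Lemma weight_add_local (y y' : G) : local y -> local y' -> (weight (y + y')%R <= d.-1)%N.
Proof.
move=> /exists_inP[gm gmG ygm] /exists_inP[gm' gmG' ygm'].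
have := Gamma_small gmG; have := Gamma_small gmG'.
have : (weight (y + y')%R <= #|gm| + #|gm'|)%N.
  apply: leq_trans (leq_card_setU gm gm'); apply: subset_leq_card.
  exact: subset_trans (supp_add y y') (setUSS ygm ygm').
rewrite -!divn2; lia.
Qed.

Lemma bicharb_local_coset (c y y' : G) : c \in perp (Sds m S) ->
  local y -> local y' -> y + y' \in Ugrp g -> bicharb c y = bicharb c y'.
Proof.
rewrite inE => /forall_inP cL ly ly' yU.
have := cL _ (Ugrp_low_weight yU (weight_add_local ly ly')).
by rewrite bicharbDr; case: (bicharb c y) (bicharb c y') => [] [].
Qed.

Section LocalSum.
Variables (phi : {set 'I_(n + m)} -> G -> R) (D : G -> R).
Hypothesis phi_local :
  forall gm (c w : G), gm \in Gamma -> [disjoint supp w & gm] -> phi gm (c + w) = phi gm c.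
Hypothesis DE : forall c, D c = \sum_(gm in Gamma) phi gm c.
Hypothesis D_Mgrp : {in Mgrp g, forall s, D s = 0}.

Lemma fourier_local_sum_support y : fourier D y != 0 -> local y.
Proof.
have -> : fourier D y = \sum_(gm in Gamma) fourier (phi gm) y.
  rewrite /fourier; under eq_bigr => e _ do rewrite DE mulr_sumr.
  exact: exchange_big.
apply: contraR => not_local; rewrite big1 // => gm gmG; apply/eqP.
have phi_gm_local (c w : G) : [disjoint supp w & gm] -> phi gm (c + w) = phi gm c.
  exact: phi_local.
apply: (contraNT _ not_local) => /(fourier_local_support phi_gm_local) ygm.
by apply/exists_inP; exists gm.
Qed.

Lemma sum_fourier_coset y0 : \sum_(y : G | y + y0 \in Ugrp g) fourier D y = 0.
Proof.
have subM : is_subgroup_ds (Mgrp g) by apply: gen_ds_subgroup.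
have /eqP := poisson_summation D y0 subM.
rewrite [X in _ == _ * X]big1 ?mulr0 => [|s sM]; last by rewrite D_Mgrp ?mulr0.
by rewrite mulf_eq0 (negbTE (natr_card_subgroup_neq0 R subM)) => /eqP.
Qed.

Lemma sum_bichar_fourier_coset c y0 : c \in perp (Sds m S) ->
  \sum_(y : G | y + y0 \in Ugrp g) chi c y * fourier D y = 0.
Proof.
move=> cL; have subU : is_subgroup_ds (Ugrp g) by apply: perp_subgroup.
have [/existsP[y1 /andP[ly1 y1U]] | no_local] :=
  boolP [exists y1, local y1 && (y1 + y0 \in Ugrp g)].
  transitivity (chi c y1 * \sum_(y : G | y + y0 \in Ugrp g) fourier D y).
    rewrite mulr_sumr; apply: eq_bigr => y yU.
    have [-> | /fourier_local_sum_support ly] := eqVneq (fourier D y) 0; first by rewrite !mulr0.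
    have yy1U := subgroup_dsD subU yU y1U; rewrite addrACA ds_addrr addr0 in yy1U.
    by rewrite /bichar (bicharb_local_coset cL ly ly1 yy1U).
  by rewrite sum_fourier_coset mulr0.
rewrite big1 // => y yU; have [-> | /fourier_local_sum_support ly] := eqVneq (fourier D y) 0.
  by rewrite mulr0.
by move/existsPn: no_local => /(_ y); rewrite ly yU.
Qed.

Lemma local_sum_eq0_on_perp : {in perp (Sds m S), forall c, D c = 0}.
Proof.
move=> c cL; have /eqP := sum_cosets (Ugrp g) (fun y => chi c y * fourier D y).
rewrite big1 => [|y0 _]; last exact: sum_bichar_fourier_coset.
rewrite eq_sym mulf_eq0 (negbTE (natr_card_subgroup_neq0 R (perp_subgroup _))) /=.
under eq_bigr => y _ do rewrite bicharC.
by rewrite fourier_inversion mulf_eq0 (negbTE (natr_card_neq0 R n m)) => /eqP.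
Qed.

End LocalSum.

End LocalDecoding.

Lemma ln_prod (R : realType) (I : finType) (A : {pred I}) (F : I -> R) :
  {in A, forall i, 0 < F i} -> ln (\prod_(i in A) F i) = \sum_(i in A) ln (F i).
Proof.
move=> F_gt0.
suff [_ ->] : 0 < \prod_(i in A) F i /\ \sum_(i in A) ln (F i) = ln (\prod_(i in A) F i) by [].
apply: (big_rec2 (fun a b => 0 < b /\ a = ln b)) => [|i a b iA [b_gt0 ->]]; first by rewrite ln1.
by rewrite mulr_gt0 ?F_gt0 // lnM ?posrE ?F_gt0.
Qed.

Lemma eq_in_of_add_idem (R : realType) (T : Type) (A : {pred T}) (p : T -> T) (F F' : T -> R) :
  {homo p : x / x \in A} -> (forall x, p (p x) = p x) ->
  {in A, forall x, F x + F (p x) = F' x + F' (p x)} -> {in A, F =1 F'}.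
Proof.
by move=> pA pp FF' x xA; have := FF' _ (pA _ xA); rewrite pp => ?; have := FF' x xA; lra.
Qed.

Section Channel.
Variables (R : realType) (n m : nat).
Local Notation G := (PDS n m).
Local Notation chi := (bichar R).

Lemma meas_part_perp_Sds (S : {set Pn n}) (c : G) : meas_part c \in perp (Sds m S).
Proof.
rewrite inE; apply/forall_inP => _ /imsetP[s _ ->].
by rewrite bicharbC bicharb_meas_part /meas_part /= -/(ds_id n m) ds_idE bicharbC bicharb0r.
Qed.

Lemma sum_bichar_Sds (S : {set Pn n}) (c : G) : stabilizer_group S ->
  \sum_(s in S) chi c (emb m s) = if c \in perp (Sds m S) then #|S|%:R else 0.
Proof.
move=> stabS; have emb_inj : injective (@emb n m) by move=> a b [].
rewrite -(big_imset (chi c)) /=; last by move=> a b _ _; apply: emb_inj.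
under eq_bigr => x _ do rewrite bicharC.
by rewrite sum_bichar_subgroup ?Sds_subgroup // card_imset.
Qed.

Lemma logical_channel_fourier (S : {set Pn n}) (P : G -> R) e : stabilizer_group S ->
  logical_channel S P e
  = #|{: G}|%:R^-1 * \sum_(c in perp (Sds m S)) chi c e * fourier P c.
Proof.
move=> stabS; rewrite /logical_channel.
have S_neq0 : #|S|%:R != 0 :> R.
  by rewrite pnatr_eq0 cards_eq0; apply/set0Pn; exists (pauli_id n); case: stabS.
suff -> : \sum_(s in S) P (ds_mul e (emb m s))
  = #|{: G}|%:R^-1 * (#|S|%:R * \sum_(c in perp (Sds m S)) chi c e * fourier P c).
  by rewrite mulrCA mulKf.
under eq_bigr => s _ do rewrite -[P _](mulKf (natr_card_neq0 R n m)) -fourier_inversion ds_mulE.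
rewrite -mulr_sumr exchange_big /=; congr (_ * _).
rewrite mulr_sumr [RHS]big_mkcond /=; apply: eq_bigr => c _.
transitivity (chi c e * fourier P c * \sum_(s in S) chi c (emb m s)).
  by rewrite mulr_sumr; apply: eq_bigr => s _; rewrite bicharDr; ring.
by rewrite sum_bichar_Sds //; case: ifP; rewrite ?mulr0 // mulrC.
Qed.

Lemma good_factor_fourier_gt0 (Q : G -> R) gm c : good_factor gm Q -> 0 < fourier Q c.
Proof. by case=> Qd _; rewrite ds_idE; apply: fourier_gt0. Qed.

Lemma fourier_conv_fam_gt0 (Gamma : {set {set 'I_(n + m)}}) (Pg : {set 'I_(n + m)} -> G -> R) c :
  (forall gm, gm \in Gamma -> good_factor gm (Pg gm)) -> 0 < fourier (conv_fam Gamma Pg) c.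
Proof.
move=> good; rewrite fourier_conv_fam; apply: prodr_gt0 => gm /good.
exact: good_factor_fourier_gt0.
Qed.

Definition syndrome_log (Q : G -> R) (c : G) : R :=
  ln (fourier Q c) + ln (fourier Q (meas_part c)).

Lemma syndrome_log_local (Q : G -> R) gm (c w : G) :
  good_factor gm Q -> [disjoint supp w & gm] -> syndrome_log Q (c + w) = syndrome_log Q c.
Proof.
case=> _ Q_gm _ wgm; have mwgm := disjointWl (supp_meas_part w) wgm.
by rewrite /syndrome_log meas_partD !(fourier_addr_disjoint _ Q_gm).
Qed.

Lemma ln_Etilde_conv_fam (Gamma : {set {set 'I_(n + m)}}) (Pg : {set 'I_(n + m)} -> G -> R) c :
  (forall gm, gm \in Gamma -> good_factor gm (Pg gm)) ->
  ln (Etilde (conv_fam Gamma Pg) c) = \sum_(gm in Gamma) syndrome_log (Pg gm) c.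
Proof.
move=> good; rewrite Etilde_fourier lnM ?posrE ?fourier_conv_fam_gt0 //.
rewrite !fourier_conv_fam !ln_prod -?big_split // => gm /good; exact: good_factor_fourier_gt0.
Qed.

End Channel.

Theorem corollary2 (R : realType) (n m : nat) (S : {set Pn n})
  (g : 'I_m -> Pn n) (d : nat) (Gamma : {set {set 'I_(n + m)}})
  (Pg Qg : {set 'I_(n + m)} -> PDS n m -> R) :
  stabilizer_group S ->
  (forall i, g i \in S) ->
  is_distance S g d ->
  (forall gm, gm \in Gamma -> (#|gm| <= (d.-1)./2)%N) ->
  (forall gm, gm \in Gamma -> good_factor gm (Pg gm)) ->
  (forall gm, gm \in Gamma -> good_factor gm (Qg gm)) ->
  (forall s, s \in Mgrp g ->
     Etilde (conv_fam Gamma Pg) s = Etilde (conv_fam Gamma Qg) s) ->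
  forall e, logical_channel S (conv_fam Gamma Pg) e
            = logical_channel S (conv_fam Gamma Qg) e.
Proof.
move=> stabS _ dist Gamma_small goodP goodQ EPQ e.
set P := conv_fam Gamma Pg; set Q := conv_fam Gamma Qg.
suff PQ : {in perp (Sds m S), fourier P =1 fourier Q}.
  by rewrite !logical_channel_fourier //; congr (_ * _); apply: eq_bigr => c /PQ ->.
have lnE : {in perp (Sds m S), forall c, ln (Etilde P c) - ln (Etilde Q c) = 0}.
  apply: (local_sum_eq0_on_perp stabS dist Gamma_small
    (phi := fun gm c => syndrome_log (Pg gm) c - syndrome_log (Qg gm) c)).
  - move=> gm c w gmG wgm.
    by rewrite (syndrome_log_local _ (goodP _ gmG) wgm) (syndrome_log_local _ (goodQ _ gmG) wgm).
  - by move=> c; rewrite !ln_Etilde_conv_fam // sumrB.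
  - by move=> s sM; rewrite EPQ ?subrr.
move=> c cL; apply: ln_inj; rewrite ?posrE ?fourier_conv_fam_gt0 //.
apply: (@eq_in_of_add_idem R _ _ (@meas_part n m)
  (fun x => ln (fourier P x)) (fun x => ln (fourier Q x)) _ _ _ c cL).
- by move=> x _; apply: meas_part_perp_Sds.
- by [].
- move=> x xL; have := lnE x xL.
  by rewrite /= !Etilde_fourier !lnM ?posrE ?fourier_conv_fam_gt0 //; lra.
Qed.
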